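(* Let $X_0$ be a smooth closed curve which is star-shaped with respect to a point $O$ (taken as origin), so that in polar coordinates $X_0(\theta)=r_0(\theta)(\cos\theta,\sin\theta)$ with $r_0>0$. Let $r:[0,2\pi]\times[0,\omega)\to(0,\infty)$ be a smooth solution, $2\pi$-periodic in $\theta$, of $$\frac{\partial r}{\partial t}=\frac{1}{g^2}\frac{\partial^2 r}{\partial\theta^2}-\frac{2}{rg^2}\left(\frac{\partial r}{\partial\theta}\right)^2-\frac{r}{g^2}+\frac{2\pi g}{rL},\qquad r(\theta,0)=r_0(\theta),$$ where $g=\sqrt{r^2+(\partial r/\partial\theta)^2}$ and $L(t)=\int_0^{2\pi}g(\theta,t)\,d\theta$, so that $X(\theta,t)=r(\theta,t)(\cos\theta,\sin\theta)$ solves Gage's area-preserving flow up to a tangential reparametrization. If $r(\theta,t)\ge c>0$ for all $(\theta,t)\in[0,2\pi]\times[0,\omega)$ for some constant $c$, then for all such $(\theta,t)$ $$r(\theta,t)\le \frac{L_0}{2},\qquad \left|\frac{\partial r}{\partial\theta}(\theta,t)\right|\le C_1,$$ where $L_0$ is the length of $X_0$ and $C_1=\max\left\{\max_\theta\left|\frac{\partial r}{\partial\theta}(\theta,0)\right|,\frac{3L_0}{\pi}\right\}$.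
   Context: Gage's area-preserving flow: $\frac{\partial X}{\partial t}=\left(\kappa-\frac{2\pi}{L}\right)N$, where $\kappa$ is the curvature, $N$ the inward unit normal, $L$ the length of the evolving curve. A closed curve is star-shaped with respect to the origin $O$ if $\det(X(s),T(s))>0$ for all arc length parameters $s$, $T$ the unit tangent. All curves are regular, closed and embedded. *)

From Stdlib Require Import Reals Lra List.
From Coquelicot Require Import Coquelicot.
Open Scope R_scope.

Definition Dth (f : R -> R -> R) : R -> R -> R :=
  fun th t => Derive (fun x => f x t) th.
Definition Dt (f : R -> R -> R) : R -> R -> R :=
  fun th t => Derive (fun s => f th s) t.

(* Iterated partial derivative along a word of directions
   (true = d/dt, false = d/dtheta). *)
Fixpoint iterD (w : list bool) (f : R -> R -> R) : R -> R -> R :=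
  match w with
  | nil => f
  | b :: w' => (if b then Dt else Dth) (iterD w' f)
  end.

Definition smooth_on (U : R -> R -> Prop) (f : R -> R -> R) : Prop :=
  forall (w : list bool) (th t : R), U th t ->
    ex_derive (fun x => iterD w f x t) th /\
    ex_derive (fun s => iterD w f th s) t /\
    continuous (fun p : R * R => iterD w f (fst p) (snd p)) (th, t).

Definition gfun (r : R -> R -> R) (th t : R) : R :=
  sqrt (r th t ^ 2 + Dth r th t ^ 2).

Definition Lfun (r : R -> R -> R) (t : R) : R :=
  RInt (fun th => gfun r th t) 0 (2 * PI).

Definition gage_rhs (r : R -> R -> R) (th t : R) : R :=
  let g := gfun r th t in
  / (g ^ 2) * Dth (Dth r) th t
  - 2 / (r th t * g ^ 2) * (Dth r th t) ^ 2
  - r th t / g ^ 2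
  + 2 * PI * g / (r th t * Lfun r t).

Definition max_abs_dr0 (r : R -> R -> R) : R :=
  real (Lub_Rbar (fun y => exists th, 0 <= th <= 2 * PI /\ y = Rabs (Dth r th 0))).

From Stdlib Require Import Reals Lra Lia Classical.
From Coquelicot Require Import Coquelicot.
Open Scope R_scope.

(* For fixed t, the coordinate r(th',t) cos(th' - th) of the curve along the
   direction th runs from r(th,t) to -r(th+pi,t) and back, so the length L(t) is
   at least 2 r(th,t).  With a = 2 pi / L and kappa the curvature, the speed
   g = sqrt(r^2 + r_th^2) satisfies g_t = d/dth F - a + a^2 g - g (kappa - a)^2
   for a periodic F, hence L' <= 0 and r <= L(t)/2 <= L_0/2.
   For the gradient, consider the first time r_th^2 reaches a level C^2 with
   C > max(max |r_th(.,0)|, 3 L_0 / pi).  At that point r_th^2 is maximal in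
   theta and has not decreased in time, so r_thth = 0, r_th r_ththth <= 0 and
   r_th d/dt r_th >= 0; but differentiating the equation in theta gives
   r_th d/dt r_th < 0, because |r_th| >= C forces r <= |r_th| and 2 pi g / L > 6. *)

Lemma continuity_2d_pt_swap f x y :
  continuity_2d_pt f x y -> continuity_2d_pt (fun u v => f v u) y x.
Proof.
  intros H eps. destruct (H eps) as [d Hd]. exists d. intros u v Hu Hv. now apply Hd.
Qed.

Lemma continuity_2d_pt_fst f x y :
  continuity_2d_pt f x y -> continuity_pt (fun u => f u y) x.
Proof.
  intros H. apply continuity_pt_locally. intros eps.
  destruct (H eps) as [d Hd]. exists d. intros u Hu. apply Hd; [exact Hu|].
  rewrite Rminus_eq_0, Rabs_R0. apply cond_pos.
Qed.

Lemma continuity_2d_pt_snd f x y :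
  continuity_2d_pt f x y -> continuity_pt (fun v => f x v) y.
Proof.
  intros H. apply (continuity_2d_pt_fst (fun u v => f v u)), continuity_2d_pt_swap, H.
Qed.

Lemma continuity_2d_pt_sqrt f x y :
  continuity_2d_pt f x y -> continuity_2d_pt (fun u v => sqrt (f u v)) x y.
Proof.
  intros H. apply (continuity_1d_2d_pt_comp sqrt f); [|exact H].
  apply continuity_pt_filterlim, continuous_sqrt.
Qed.

Lemma continuity_2d_pt_pow2 f x y :
  continuity_2d_pt f x y -> continuity_2d_pt (fun u v => f u v ^ 2) x y.
Proof.
  intros H. apply continuity_2d_pt_ext with (fun u v => f u v * f u v).
  - intros; ring.
  - now apply continuity_2d_pt_mult.
Qed.

Lemma continuous_of_continuity_2d_pt (f : R -> R -> R) x y :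
  continuity_2d_pt f x y -> continuous (fun u => f u y) x.
Proof. intros H. apply continuity_pt_filterlim, continuity_2d_pt_fst, H. Qed.

Lemma ex_RInt_of_continuous (f : R -> R) a b :
  (forall z, Rmin a b <= z <= Rmax a b -> continuous f z) -> ex_RInt f a b.
Proof. exact (ex_RInt_continuous (V := R_CompleteNormedModule) f a b). Qed.

(* Continuity is only assumed along the segment [a, b] x {t0}; uniform continuity
   there, on a compact set, is what makes nearby superlevel points pass to the limit. *)
Lemma superlevel_set_closed (F : R -> R -> R) a b t0 C : a <= b ->
  (forall th, a <= th <= b -> continuity_2d_pt F th t0) ->
  (forall eps, 0 < eps ->
     exists th t, a <= th <= b /\ Rabs (t - t0) < eps /\ C <= F th t) ->
  exists th, a <= th <= b /\ C <= F th t0.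
Proof.
  intros Hab Hc Hnear.
  destruct (continuity_ab_maj (fun th => F th t0) a b Hab) as [m [Hm Hmab]].
  { intros th Hth. apply continuity_2d_pt_fst, Hc, Hth. }
  exists m. split; [exact Hmab|].
  apply Rnot_lt_le. intros Hlt.
  destruct (uniform_continuity_2d_1d F a b t0 Hc (mkposreal _ (proj2 (Rlt_0_minus _ _) Hlt)))
    as [d Hd].
  pose proof (cond_pos d) as Hdpos.
  destruct (Hnear d Hdpos) as [th [t [Hth [Ht HC]]]].
  apply Rabs_lt_between' in Ht.
  assert (Hclose := Hd th t0 th t Hth ltac:(lra) Hth ltac:(lra)).
  rewrite Rminus_eq_0, Rabs_R0 in Hclose.
  specialize (Hclose Hdpos). apply Rabs_lt_between in Hclose.
  specialize (Hm th Hth). simpl in Hclose. lra.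
Qed.

Lemma le_of_lt_on_left (f : R -> R) x e C : continuity_pt f x -> 0 < e ->
  (forall y, x - e < y < x -> f y < C) -> f x <= C.
Proof.
  intros Hc He Hleft. apply Rnot_lt_le. intros Hlt.
  rewrite continuity_pt_locally in Hc.
  destruct (Hc (mkposreal _ (proj2 (Rlt_0_minus _ _) Hlt))) as [d Hd]. simpl in Hd.
  pose proof (cond_pos d) as Hdpos.
  set (y := x - Rmin (d / 2) (e / 2)).
  assert (Hm1 := Rmin_l (d / 2) (e / 2)). assert (Hm2 := Rmin_r (d / 2) (e / 2)).
  assert (Hm0 : 0 < Rmin (d / 2) (e / 2)) by (apply Rmin_pos; lra).
  assert (Hy : ball x d y) by (apply Rabs_lt_between'; unfold y; lra).
  specialize (Hd y Hy). apply Rabs_lt_between in Hd.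
  assert (f y < C) by (apply Hleft; unfold y; lra). lra.
Qed.

Lemma first_touching_time (F : R -> R -> R) a b t0 C : a <= b -> 0 <= t0 ->
  (forall th t, a <= th <= b -> 0 <= t <= t0 -> continuity_2d_pt F th t) ->
  (forall th, a <= th <= b -> F th 0 < C) ->
  (exists th, a <= th <= b /\ C <= F th t0) ->
  exists ts ths, 0 < ts <= t0 /\ a <= ths <= b /\ F ths ts = C /\
    (forall s th, 0 <= s < ts -> a <= th <= b -> F th s < C) /\
    (forall th, a <= th <= b -> F th ts <= C).
Proof.
  intros Hab Ht0 Hc H0 Hreach.
  set (S := fun t => 0 <= t <= t0 /\ exists th, a <= th <= b /\ C <= F th t).
  (* ts is the infimum of S, obtained as minus the supremum of -S *)
  destruct (completeness (fun u => S (- u))) as [m [Hub Hlub]].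
  { exists 0. intros u [Hu _]. lra. }
  { exists (- t0). unfold S. rewrite Ropp_involutive. split; [lra|exact Hreach]. }
  set (ts := - m).
  assert (Hts0 : ts <= t0).
  { unfold ts. enough (- t0 <= m) by lra. apply Hub.
    unfold S. rewrite Ropp_involutive. split; [lra|exact Hreach]. }
  assert (Hts1 : 0 <= ts).
  { unfold ts. enough (m <= 0) by lra. apply Hlub. intros u [Hu _]. lra. }
  assert (Hbefore : forall s th, 0 <= s < ts -> a <= th <= b -> F th s < C).
  { intros s th Hs Hth. apply Rnot_le_lt. intros HC.
    enough (- s <= m) by (unfold ts in Hs; lra).
    apply Hub. unfold S. rewrite Ropp_involutive. split; [lra|]. now exists th. }
  assert (Hnear : forall eps, 0 < eps ->
            exists th t, a <= th <= b /\ Rabs (t - ts) < eps /\ C <= F th t).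
  { intros eps Heps. apply NNPP. intros Hno.
    enough (m <= m - eps) by lra.
    apply Hlub. intros u [Hu [th [Hth HC]]]. apply Rnot_lt_le. intros Hlt.
    apply Hno. exists th, (- u). split; [exact Hth|]. split; [|exact HC].
    assert (u <= m) by (apply Hub; split; [exact Hu|]; now exists th).
    apply Rabs_lt_between'. unfold ts. lra. }
  destruct (superlevel_set_closed F a b ts C Hab) as [ths [Hths HCs]].
  { intros th Hth. apply Hc; lra. }
  { exact Hnear. }
  assert (Htspos : 0 < ts).
  { destruct Hts1 as [|Hz]; [easy|]. rewrite <- Hz in HCs.
    specialize (H0 ths Hths). lra. }
  assert (Hat : forall th, a <= th <= b -> F th ts <= C).
  { intros th Hth. apply (le_of_lt_on_left (fun s => F th s) ts ts).
    - apply continuity_2d_pt_snd, Hc; lra.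
    - exact Htspos.
    - intros s Hs. apply Hbefore; [lra|exact Hth]. }
  exists ts, ths. repeat split; try lra; try easy.
  apply Rle_antisym; [apply Hat, Hths|exact HCs].
Qed.

Lemma continuity_pt_RInt_param (f : R -> R -> R) a b t : a <= b ->
  (forall x, a <= x <= b -> continuity_2d_pt f x t) ->
  locally t (fun s => ex_RInt (fun x => f x s) a b) ->
  continuity_pt (fun s => RInt (fun x => f x s) a b) t.
Proof.
  intros Hab Hc [e He]. rewrite continuity_pt_locally. intros eps.
  assert (Heps' : 0 < eps / (b - a + 1)).
  { apply Rdiv_lt_0_compat; [apply cond_pos|lra]. }
  destruct (uniform_continuity_2d_1d f a b t Hc (mkposreal _ Heps')) as [d Hd].
  pose proof (cond_pos d) as Hdpos.
  exists (mkposreal _ (Rmin_pos _ _ (cond_pos e) Hdpos)). intros s Hs.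
  assert (Hse : ball t e s) by (eapply Rlt_le_trans; [exact Hs|apply Rmin_l]).
  assert (Hsd : Rabs (s - t) < d) by (eapply Rlt_le_trans; [exact Hs|apply Rmin_r]).
  apply Rabs_lt_between' in Hsd.
  assert (Ht : ball t e t) by apply ball_center.
  assert (Hdiff : RInt (fun x => f x s) a b - RInt (fun x => f x t) a b
                 = RInt (fun x => f x s - f x t) a b).
  { symmetry. apply (RInt_minus (V := R_CompleteNormedModule)); apply He; assumption. }
  rewrite Hdiff.
  eapply Rle_lt_trans.
  - apply (abs_RInt_le_const _ a b (eps / (b - a + 1)) Hab).
    + apply (ex_RInt_minus (V := R_NormedModule)); apply He; assumption.
    + intros x Hx. left. apply (Hd x t x s Hx ltac:(lra) Hx ltac:(lra)).
      rewrite Rminus_eq_0, Rabs_R0. exact Hdpos.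
  - apply Rmult_lt_reg_r with (b - a + 1); [lra|].
    field_simplify; [|lra]. pose proof (cond_pos eps). nra.
Qed.

Lemma periodic_representative (f : R -> R) T : 0 < T -> (forall x, f (x + T) = f x) ->
  forall x, exists y, 0 <= y < T /\ f x = f y.
Proof.
  intros HT Hper x.
  assert (Hnat : forall (n : nat) z, f (z + INR n * T) = f z).
  { induction n as [|n IH]; intros z.
    - simpl. f_equal. ring.
    - rewrite S_INR, <- (IH z), <- (Hper (z + INR n * T)). f_equal. ring. }
  assert (Hint : forall k z, f (z + IZR k * T) = f z).
  { intros k z. destruct (Z.le_gt_cases 0 k) as [Hk|Hk].
    - destruct (IZN k Hk) as [n ->]. rewrite <- INR_IZR_INZ. apply Hnat.
    - destruct (IZN (- k) ltac:(lia)) as [n Hn].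
      replace (IZR k) with (- INR n) by (rewrite INR_IZR_INZ, <- Hn, opp_IZR; ring).
      rewrite <- (Hnat n). f_equal. ring. }
  set (k := (up (x / T) - 1)%Z).
  destruct (archimed (x / T)) as [H1 H2].
  assert (Hk : IZR k <= x / T < IZR k + 1) by (unfold k; rewrite minus_IZR; simpl; lra).
  exists (x - IZR k * T). split.
  - assert (IZR k * T <= x < IZR k * T + T); [|lra].
    assert (E : x / T * T = x) by (field; lra).
    assert (H3 := Rmult_le_compat_r T _ _ (Rlt_le _ _ HT) (proj1 Hk)).
    assert (H4 := Rmult_lt_compat_r T _ _ HT (proj2 Hk)).
    rewrite E in H3, H4. lra.
  - rewrite <- (Hint k (x - IZR k * T)). f_equal. ring.
Qed.

Lemma sq_lt_sq x y : 0 <= x -> x < y -> x ^ 2 < y ^ 2.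
Proof. intros. nra. Qed.

Lemma mul_le_sq_of_sq_le p v : v ^ 2 <= p ^ 2 -> p * v <= p * p.
Proof. intros. pose proof (pow2_ge_0 (p - v)). nra. Qed.

Lemma Derive_periodic (f : R -> R) T x : (forall y, f (y + T) = f y) ->
  ex_derive f (x + T) -> Derive f (x + T) = Derive f x.
Proof.
  intros Hper Hex.
  rewrite <- (Derive_ext (fun y => f (y + T)) f x Hper).
  rewrite (Derive_comp f (fun y => y + T) x Hex) by (auto_derive; auto).
  replace (Derive (fun y => y + T) x) with 1; [ring|].
  symmetry. apply is_derive_unique. auto_derive; auto; ring.
Qed.

Lemma is_derive_ge0_left_max (k : R -> R) x l e : is_derive k x l -> 0 < e ->
  (forall y, x - e < y < x -> k y <= k x) -> 0 <= l.
Proof.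
  intros Hd He Hk. apply is_derive_Reals in Hd.
  apply Rnot_lt_le. intros Hl.
  destruct (Hd (- l / 2) ltac:(lra)) as [d Hd'].
  pose proof (cond_pos d) as Hdpos.
  set (h := - Rmin (d / 2) (e / 2)).
  assert (Hm1 := Rmin_l (d / 2) (e / 2)). assert (Hm2 := Rmin_r (d / 2) (e / 2)).
  assert (Hm0 : 0 < Rmin (d / 2) (e / 2)) by (apply Rmin_pos; lra).
  assert (Hh : Rabs h < d) by (unfold h; rewrite Rabs_Ropp, Rabs_pos_eq; lra).
  specialize (Hd' h ltac:(unfold h; lra) Hh). apply Rabs_lt_between in Hd'.
  assert (Hky := Hk (x + h) ltac:(unfold h; lra)).
  assert (Hq : 0 <= (k (x + h) - k x) / h).
  { replace ((k (x + h) - k x) / h) with ((k x - k (x + h)) / (- h)) by (field; unfold h; lra).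
    apply Rle_mult_inv_pos; [lra | unfold h; lra]. }
  lra.
Qed.

Lemma is_derive_le0_right_max (k : R -> R) x l e : is_derive k x l -> 0 < e ->
  (forall y, x < y < x + e -> k y <= k x) -> l <= 0.
Proof.
  intros Hd He Hk.
  assert (Hrefl : is_derive (fun y => k (- y)) (- x) (- l)).
  { replace (- l) with (- (1) * l) by ring.
    apply (is_derive_comp k (fun y => - y)); [rewrite Ropp_involutive; exact Hd|].
    auto_derive; auto. }
  enough (0 <= - l) by lra.
  apply (is_derive_ge0_left_max _ (- x) (- l) e Hrefl He).
  intros y Hy. rewrite Ropp_involutive. apply Hk. lra.
Qed.

Lemma is_derive_max (h : R -> R) x l : is_derive h x l -> (forall y, h y <= h x) -> l = 0.
Proof.
  intros Hd Hmax. apply Rle_antisym.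
  - apply (is_derive_le0_right_max h x l 1 Hd ltac:(lra)). intros; apply Hmax.
  - apply (is_derive_ge0_left_max h x l 1 Hd ltac:(lra)). intros; apply Hmax.
Qed.

Lemma is_derive2_max (h h' : R -> R) x l : (forall y, is_derive h y (h' y)) ->
  is_derive h' x l -> (forall y, h y <= h x) -> l <= 0.
Proof.
  intros Hd Hd2 Hmax.
  assert (Hcrit : h' x = 0) by (apply (is_derive_max h x); auto).
  apply Rnot_lt_le. intros Hl.
  apply is_derive_Reals in Hd2.
  destruct (Hd2 (l / 2) ltac:(lra)) as [d Hd'].
  pose proof (cond_pos d) as Hdpos.
  assert (Hincr : forall z, 0 < z < d -> 0 < h' (x + z)).
  { intros z Hz.
    specialize (Hd' z ltac:(lra) ltac:(rewrite Rabs_pos_eq; lra)).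
    rewrite Hcrit, Rminus_0_r in Hd'. apply Rabs_lt_between in Hd'.
    replace (h' (x + z)) with (h' (x + z) / z * z) by (field; lra).
    apply Rmult_lt_0_compat; lra. }
  destruct (MVT_cor2 h h' x (x + d / 2) ltac:(lra)) as [c [Hmvt Hc]].
  { intros c _. apply is_derive_Reals, Hd. }
  assert (0 < h' c) by (replace c with (x + (c - x)) by ring; apply Hincr; lra).
  assert (0 < h' c * (x + d / 2 - x)) by (apply Rmult_lt_0_compat; lra).
  specialize (Hmax (x + d / 2)). lra.
Qed.

Lemma Lub_Rbar_image_ge (f : R -> R) a b x : a <= b ->
  (forall y, a <= y <= b -> continuity_pt f y) -> a <= x <= b ->
  f x <= real (Lub_Rbar (fun v => exists y, a <= y <= b /\ v = f y)).
Proof.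
  intros Hab Hc Hx.
  destruct (continuity_ab_maj f a b Hab Hc) as [m [Hm Hmab]].
  assert (Hlub : is_lub_Rbar (fun v => exists y, a <= y <= b /\ v = f y) (f m)).
  { split.
    - intros v [y [Hy ->]]. apply Hm, Hy.
    - intros u Hu. apply Hu. now exists m. }
  rewrite (is_lub_Rbar_unique _ _ Hlub). apply Hm, Hx.
Qed.

Section PolarLength.

Variables rho rho' : R -> R.
Hypothesis rho_derive : forall th, is_derive rho th (rho' th).
Hypothesis rho'_continuous : forall th, continuous rho' th.

Let speed th := sqrt (rho th ^ 2 + rho' th ^ 2).

Lemma rho_continuous th : continuous rho th.
Proof. exact (ex_derive_continuous (K := R_AbsRing) rho th (ex_intro _ _ (rho_derive th))). Qed.

Lemma ex_RInt_speed a b : ex_RInt speed a b.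
Proof.
  assert (Hsq : forall (f : R -> R) y, continuous f y -> continuous (fun z => f z ^ 2) y).
  { intros f y Hf. apply (continuous_comp f (fun z => z ^ 2)); [exact Hf|].
    apply (ex_derive_continuous (K := R_AbsRing) (fun z => z ^ 2)). auto_derive. easy. }
  apply ex_RInt_of_continuous. intros th _. unfold speed.
  apply continuous_sqrt_comp.
  apply (continuous_plus (fun y => rho y ^ 2) (fun y => rho' y ^ 2));
    apply Hsq; [apply rho_continuous|apply rho'_continuous].
Qed.

(* rho th * cos (th - x) is the coordinate of the curve along the direction x,
   and its derivative is bounded by the speed. *)
Lemma projection_variation_le x a b : a <= b ->
  Rabs (rho b * cos (b - x) - rho a * cos (a - x)) <= RInt speed a b.
Proof.
  intros Hab.
  set (dproj := fun th => rho' th * cos (th - x) - rho th * sin (th - x)).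
  assert (Hcont : forall th, continuous dproj th).
  { intros th. unfold dproj.
    apply (continuous_minus (fun y => rho' y * cos (y - x)) (fun y => rho y * sin (y - x))).
    - apply (continuous_mult rho' (fun y => cos (y - x))); [apply rho'_continuous|].
      apply continuous_cos_comp, (continuous_minus (fun y => y) (fun _ => x));
        [apply continuous_id|apply continuous_const].
    - apply (continuous_mult rho (fun y => sin (y - x))); [apply rho_continuous|].
      apply continuous_sin_comp, (continuous_minus (fun y => y) (fun _ => x));
        [apply continuous_id|apply continuous_const]. }
  assert (HI : is_RInt dproj a b (rho b * cos (b - x) - rho a * cos (a - x))).
  { apply (is_RInt_derive (fun th => rho th * cos (th - x))); [|intros; apply Hcont].
    intros th _. unfold dproj.
    assert (Hcos : is_derive (fun y => cos (y - x)) th (- sin (th - x)))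
      by (auto_derive; [easy|unfold Rminus; ring]).
    replace (rho' th * cos (th - x) - rho th * sin (th - x))
      with (rho' th * cos (th - x) + rho th * - sin (th - x)) by ring.
    exact (is_derive_mult rho _ th _ _ (rho_derive th) Hcos (fun n m => Rmult_comm n m)). }
  rewrite <- (is_RInt_unique _ _ _ _ HI).
  eapply Rle_trans; [apply abs_RInt_le; [exact Hab|eexists; exact HI]|].
  apply RInt_le; [exact Hab| |apply ex_RInt_speed|].
  - apply ex_RInt_of_continuous. intros; apply continuous_Rabs_comp, Hcont.
  - intros th _. unfold speed, dproj. rewrite <- sqrt_Rsqr_abs. apply sqrt_le_1_alt.
    pose proof (sin2_cos2 (th - x)) as Hpyth. unfold Rsqr in *.
    set (c := cos (th - x)) in *. set (s := sin (th - x)) in *.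
    assert (Hlagrange : (rho th ^ 2 + rho' th ^ 2) * (s * s + c * c)
      - (rho' th * c - rho th * s) * (rho' th * c - rho th * s)
      = (rho' th * s + rho th * c) ^ 2) by ring.
    rewrite Hpyth in Hlagrange. pose proof (pow2_ge_0 (rho' th * s + rho th * c)). lra.
Qed.

Hypothesis rho_periodic : forall th, rho (th + 2 * PI) = rho th.
Hypothesis rho_pos : forall th, 0 < rho th.

Lemma double_radius_le_length x : 2 * rho x <= RInt speed 0 (2 * PI).
Proof.
  pose proof PI_RGT_0 as HPI.
  destruct (periodic_representative rho (2 * PI) ltac:(lra) rho_periodic x) as [y [Hy ->]].
  assert (Hend : rho (2 * PI) * cos (2 * PI - y) = rho 0 * cos (0 - y)).
  { rewrite <- (Rplus_0_l (2 * PI)) at 1. rewrite rho_periodic.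
    replace (2 * PI - y) with ((0 - y) + 2 * INR 1 * PI) by (simpl; ring).
    now rewrite cos_period. }
  assert (Hy0 : rho y * cos (y - y) = rho y) by (rewrite Rminus_eq_0, cos_0; ring).
  assert (Hchasles : forall a b c, RInt speed a c = RInt speed a b + RInt speed b c).
  { intros. symmetry. apply (RInt_Chasles speed); apply ex_RInt_speed. }
  destruct (Rle_lt_dec y PI) as [Hy1|Hy1].
  - assert (Hopp : rho (y + PI) * cos (y + PI - y) = - rho (y + PI))
      by (replace (y + PI - y) with PI by ring; rewrite cos_PI; ring).
    rewrite (Hchasles 0 y), (Hchasles y (y + PI)).
    assert (A1 := projection_variation_le y 0 y ltac:(lra)).
    assert (A2 := projection_variation_le y y (y + PI) ltac:(lra)).
    assert (A3 := projection_variation_le y (y + PI) (2 * PI) ltac:(lra)).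
    rewrite Hend, Hy0, Hopp in *.
    pose proof (rho_pos (y + PI)).
    apply Rabs_le_between in A1, A2, A3. lra.
  - assert (Hopp : rho (y - PI) * cos (y - PI - y) = - rho (y - PI))
      by (replace (y - PI - y) with (- PI) by ring; rewrite cos_neg, cos_PI; ring).
    rewrite (Hchasles 0 (y - PI)), (Hchasles (y - PI) y (2 * PI)).
    assert (A1 := projection_variation_le y 0 (y - PI) ltac:(lra)).
    assert (A2 := projection_variation_le y (y - PI) y ltac:(lra)).
    assert (A3 := projection_variation_le y y (2 * PI) ltac:(lra)).
    rewrite Hend, Hy0, Hopp in *.
    pose proof (rho_pos (y - PI)).
    apply Rabs_le_between in A1, A2, A3. lra.
Qed.

End PolarLength.

(* Pointwise form of [gage_rhs]: [p], [q] stand for the first two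
   theta-derivatives of the radius [r], [g] for the speed and [a] for 2 pi / L. *)
Definition rhs_pt (r p q g a : R) : R :=
  / (g ^ 2) * q - 2 / (r * g ^ 2) * p ^ 2 - r / g ^ 2 + a * g / r.

(* With kappa = (2 g^2 - r^2 - r q) / g^3 the curvature, the right-hand side
   minus the left-hand side equals g (kappa - a)^2. *)
Lemma speed_rate_le (r p q w g a : R) : 0 < r -> 0 < g -> g ^ 2 = r ^ 2 + p ^ 2 ->
  (r * rhs_pt r p q g a + p * w) / g <=
  - a + a ^ 2 * g
  + ((q * g - p * (r * p + p * q) / g) / g ^ 2 * rhs_pt r p q g a + p / g * w
     + a * (q * r - p * p) / (r * r + p * p)).
Proof.
  intros Hr Hg Hg2. unfold rhs_pt.
  set (kappa := (2 * g ^ 2 - r ^ 2 - r * q) / g ^ 3).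
  match goal with |- ?lhs <= ?rhs => assert (E : rhs - lhs = g * (kappa - a) ^ 2) end.
  { unfold kappa.
    replace (p * (r * p + p * q)) with (p ^ 2 * (r + q)) by ring.
    replace (r * r + p * p) with (g ^ 2) by lra.
    replace (p * p) with (p ^ 2) by ring.
    replace (p ^ 2) with (g ^ 2 - r ^ 2) by lra.
    field. lra. }
  assert (0 <= g * (kappa - a) ^ 2) by (apply Rmult_le_pos; [lra|apply pow2_ge_0]).
  lra.
Qed.

(* theta-derivative of [rhs_pt] at a point where q = 0, with [s] the third
   theta-derivative of the radius. *)
Definition rhs_pt_dtheta_crit (r p s g a : R) : R :=
  s / g ^ 2 + 2 * p ^ 3 * (g ^ 2 + 2 * r ^ 2) / (r ^ 2 * g ^ 4)
  + p * (2 * r ^ 2 - g ^ 2) / g ^ 4 + a * (r * p / g * r - g * p) / r ^ 2.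

Lemma rhs_pt_dtheta_crit_sign (r p s g a : R) : 0 < r -> 0 < g -> g ^ 2 = r ^ 2 + p ^ 2 ->
  r ^ 2 <= p ^ 2 -> 6 < a * g -> p * s <= 0 -> p * rhs_pt_dtheta_crit r p s g a < 0.
Proof.
  intros Hr Hg Hg2 Hrp Hag Hps.
  assert (Hp2 : 0 < p ^ 2) by nra.
  set (bracket := 2 * p ^ 2 * (3 * r ^ 2 + p ^ 2) + r ^ 2 * (r ^ 2 - p ^ 2) - a * g ^ 3 * p ^ 2).
  assert (E : p * rhs_pt_dtheta_crit r p s g a
              = p * s / g ^ 2 + p ^ 2 / (r ^ 2 * g ^ 4) * bracket).
  { assert (Hcross : r * p / g * r - g * p = - p ^ 3 / g).
    { replace (g * p) with (g ^ 2 * p / g) by (field; lra). rewrite Hg2. field. lra. }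
    unfold rhs_pt_dtheta_crit, bracket. rewrite Hcross.
    replace (g ^ 2 + 2 * r ^ 2) with (3 * r ^ 2 + p ^ 2) by lra.
    replace (2 * r ^ 2 - g ^ 2) with (r ^ 2 - p ^ 2) by lra.
    field. lra. }
  assert (Hbracket : bracket < 0).
  { assert (6 * g ^ 2 * p ^ 2 < a * g ^ 3 * p ^ 2).
    { replace (6 * g ^ 2 * p ^ 2) with (6 * (g ^ 2 * p ^ 2)) by ring.
      replace (a * g ^ 3 * p ^ 2) with ((a * g) * (g ^ 2 * p ^ 2)) by ring.
      apply Rmult_lt_compat_r; [|exact Hag]. apply Rmult_lt_0_compat; [nra|exact Hp2]. }
    unfold bracket. rewrite Hg2 in *. nra. }
  rewrite E.
  assert (p * s / g ^ 2 <= 0)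
    by (apply Rmult_le_0_r; [exact Hps|apply Rlt_le, Rinv_0_lt_compat; nra]).
  assert (0 < p ^ 2 / (r ^ 2 * g ^ 4))
    by (apply Rdiv_lt_0_compat; [exact Hp2|apply Rmult_lt_0_compat; apply pow_lt; lra]).
  nra.
Qed.

Lemma gfun_sq r th t : gfun r th t ^ 2 = r th t ^ 2 + Dth r th t ^ 2.
Proof. unfold gfun. apply pow2_sqrt, Rplus_le_le_0_compat; apply pow2_ge_0. Qed.

Lemma gfun_pos r th t : 0 < r th t -> 0 < gfun r th t.
Proof.
  intros H. unfold gfun. apply sqrt_lt_R0, Rplus_lt_le_0_compat.
  - apply pow_lt, H.
  - apply pow2_ge_0.
Qed.

Lemma gage_rhs_pt r th t : 0 < r th t -> Lfun r t <> 0 ->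
  gage_rhs r th t
  = rhs_pt (r th t) (Dth r th t) (Dth (Dth r) th t) (gfun r th t) (2 * PI / Lfun r t).
Proof.
  intros Hr HL. pose proof (gfun_pos r th t Hr).
  unfold gage_rhs, rhs_pt. cbv zeta. field. repeat split; lra.
Qed.

Definition gfun_dt (r : R -> R -> R) th t : R :=
  (r th t * Dt r th t + Dth r th t * Dt (Dth r) th t) / gfun r th t.

(* The term [a * atan (r_theta / r)] is [a] times (theta - tangent angle) up to
   a constant, so its theta-derivative is [a (1 - kappa g)]. *)
Definition flux (r : R -> R -> R) a t th : R :=
  Dth r th t / gfun r th t * Dt r th t + a * atan (Dth r th t / r th t).

Definition flux_dtheta (r : R -> R -> R) a t th : R :=
  let p := Dth r th t in
  let q := Dth (Dth r) th t in
  let g := gfun r th t in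
  (q * g - p * (r th t * p + p * q) / g) / g ^ 2 * Dt r th t + p / g * Dth (Dt r) th t
  + a * (q * r th t - p * p) / (r th t * r th t + p * p).

Section GageFlow.

Variables (r : R -> R -> R) (omega : Rbar) (delta : R).
Hypothesis delta_pos : 0 < delta.
Hypothesis r_smooth : smooth_on (fun _ t => - delta < t /\ Rbar_lt (Finite t) omega) r.
Hypothesis r_periodic : forall th t, 0 <= t -> Rbar_lt (Finite t) omega ->
  r (th + 2 * PI) t = r th t.
Hypothesis r_pos : forall th t, 0 <= t -> Rbar_lt (Finite t) omega -> 0 < r th t.
Hypothesis r_flow : forall th t, 0 <= t -> Rbar_lt (Finite t) omega ->
  Dt r th t = gage_rhs r th t.

Let ext_time t := - delta < t /\ Rbar_lt (Finite t) omega.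

Lemma ext_time_of_time t : 0 <= t -> Rbar_lt (Finite t) omega -> ext_time t.
Proof. intros; split; [lra|assumption]. Qed.

Lemma ext_time_locally t : ext_time t -> locally t ext_time.
Proof.
  intros [Hlo Hhi].
  assert (Hrad : exists e, 0 < e /\ t - e >= - delta /\ Rbar_le (Finite (t + e)) omega).
  { destruct omega as [w| |]; simpl in Hhi; try contradiction.
    - exists (Rmin (t + delta) (w - t)).
      assert (Hm1 := Rmin_l (t + delta) (w - t)). assert (Hm2 := Rmin_r (t + delta) (w - t)).
      split; [apply Rmin_pos; lra|]. simpl. lra.
    - exists (t + delta). simpl. lra. }
  destruct Hrad as [e [He [Hle Hre]]].
  exists (mkposreal e He). intros s Hs. apply Rabs_lt_between' in Hs. simpl in Hs.
  split; [lra|]. eapply Rbar_lt_le_trans; [|exact Hre]. simpl. lra.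
Qed.

Lemma ex_derive_iterD_th w th t : ext_time t -> ex_derive (fun x => iterD w r x t) th.
Proof. intros H. exact (proj1 (r_smooth w th t H)). Qed.

Lemma ex_derive_iterD_t w th t : ext_time t -> ex_derive (fun s => iterD w r th s) t.
Proof. intros H. exact (proj1 (proj2 (r_smooth w th t H))). Qed.

Lemma iterD_continuity_2d w th t : ext_time t -> continuity_2d_pt (iterD w r) th t.
Proof. intros H. apply continuity_2d_pt_filterlim. exact (proj2 (proj2 (r_smooth w th t H))). Qed.

Lemma Dth_periodic th t : 0 <= t -> Rbar_lt (Finite t) omega ->
  Dth r (th + 2 * PI) t = Dth r th t.
Proof.
  intros Ht Hto. apply Derive_periodic.
  - intros; now apply r_periodic.
  - apply (ex_derive_iterD_th nil). now apply ext_time_of_time.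
Qed.

Lemma Dth2_periodic th t : 0 <= t -> Rbar_lt (Finite t) omega ->
  Dth (Dth r) (th + 2 * PI) t = Dth (Dth r) th t.
Proof.
  intros Ht Hto. apply Derive_periodic.
  - intros; now apply Dth_periodic.
  - apply (ex_derive_iterD_th (false :: nil)). now apply ext_time_of_time.
Qed.

Lemma Dt_Dth th t : ext_time t -> Dt (Dth r) th t = Dth (Dt r) th t.
Proof.
  intros H. symmetry. apply (Schwarz r th t).
  - destruct (ext_time_locally t H) as [e He]. exists e. intros u v _ Hv.
    specialize (He v Hv).
    repeat split; [apply (ex_derive_iterD_th nil) | apply (ex_derive_iterD_t nil)
                  | apply (ex_derive_iterD_th (true :: nil))
                  | apply (ex_derive_iterD_t (false :: nil))]; exact He.
  - exact (iterD_continuity_2d (false :: true :: nil) th t H).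
  - exact (iterD_continuity_2d (true :: false :: nil) th t H).
Qed.

Lemma gfun_continuity_2d th t : ext_time t -> continuity_2d_pt (gfun r) th t.
Proof.
  intros H. apply continuity_2d_pt_sqrt, continuity_2d_pt_plus; apply continuity_2d_pt_pow2.
  - exact (iterD_continuity_2d nil th t H).
  - exact (iterD_continuity_2d (false :: nil) th t H).
Qed.

Lemma gfun_dt_continuity_2d th t : ext_time t -> 0 < r th t -> continuity_2d_pt (gfun_dt r) th t.
Proof.
  intros H Hr. unfold gfun_dt, Rdiv. apply continuity_2d_pt_mult.
  - apply continuity_2d_pt_plus; apply continuity_2d_pt_mult.
    + exact (iterD_continuity_2d nil th t H).
    + exact (iterD_continuity_2d (true :: nil) th t H).
    + exact (iterD_continuity_2d (false :: nil) th t H).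
    + exact (iterD_continuity_2d (true :: false :: nil) th t H).
  - apply continuity_2d_pt_inv; [now apply gfun_continuity_2d|].
    apply Rgt_not_eq, gfun_pos, Hr.
Qed.

Lemma gfun_is_derive_t th t : ext_time t -> 0 < r th t ->
  is_derive (fun s => gfun r th s) t (gfun_dt r th t).
Proof.
  intros H Hr. pose proof (gfun_pos r th t Hr) as Hg.
  unfold gfun_dt, gfun in *. auto_derive.
  - repeat split.
    + exact (ex_derive_iterD_t nil th t H).
    + exact (ex_derive_iterD_t (false :: nil) th t H).
    + nra.
  - change (Derive (fun s => r th s) t) with (Dt r th t).
    change (Derive (fun s => Dth r th s) t) with (Dt (Dth r) th t).
    replace (r th t * (r th t * 1) + Dth r th t * (Dth r th t * 1))
      with (r th t ^ 2 + Dth r th t ^ 2) by ring.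
    field. lra.
Qed.

Lemma time_locally t : 0 < t -> Rbar_lt (Finite t) omega ->
  locally t (fun s => 0 <= s /\ Rbar_lt (Finite s) omega).
Proof.
  intros Ht Hto.
  apply (filter_imp (fun s => 0 < s /\ ext_time s)); [intros s [Hs [_ Hso]]; split; [lra|exact Hso]|].
  apply filter_and; [exact (open_gt 0 t Ht)|apply ext_time_locally, ext_time_of_time; [lra|exact Hto]].
Qed.

Lemma ex_RInt_gfun t : ext_time t -> ex_RInt (fun th => gfun r th t) 0 (2 * PI).
Proof.
  intros H. apply ex_RInt_of_continuous. intros th _.
  apply continuous_of_continuity_2d_pt, gfun_continuity_2d, H.
Qed.

Lemma Lfun_continuity t : ext_time t -> continuity_pt (Lfun r) t.
Proof.
  intros H. pose proof PI_RGT_0.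
  apply continuity_pt_RInt_param; [lra| |].
  - intros th _. now apply gfun_continuity_2d.
  - apply (filter_imp ext_time); [exact ex_RInt_gfun|]. now apply ext_time_locally.
Qed.

Lemma Lfun_is_derive t : 0 < t -> Rbar_lt (Finite t) omega ->
  is_derive (Lfun r) t (RInt (fun th => gfun_dt r th t) 0 (2 * PI)).
Proof.
  intros Ht Hto. pose proof PI_RGT_0.
  assert (Hloc := time_locally t Ht Hto).
  assert (Hgdt : forall th s, 0 <= s -> Rbar_lt (Finite s) omega ->
            is_derive (fun u => gfun r th u) s (gfun_dt r th s)).
  { intros th s Hs Hso. apply gfun_is_derive_t; [now apply ext_time_of_time|now apply r_pos]. }
  replace (RInt (fun th => gfun_dt r th t) 0 (2 * PI))
    with (RInt (fun th => Derive (fun u => gfun r th u) t) 0 (2 * PI)).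
  2:{ apply RInt_ext. intros th _. apply is_derive_unique, Hgdt; [lra|exact Hto]. }
  apply (is_derive_RInt_param (fun u th => gfun r th u)).
  - apply (filter_imp _ _ (fun s Hs th _ => ex_intro _ _ (Hgdt th s (proj1 Hs) (proj2 Hs))) Hloc).
  - intros th _. apply (continuity_2d_pt_swap (fun th u => Derive (fun z => gfun r th z) u)).
    apply continuity_2d_pt_ext_loc with (gfun_dt r).
    + destruct Hloc as [e He]. exists e. intros u v _ Hv.
      destruct (He v Hv) as [Hv0 Hvo]. symmetry. apply is_derive_unique, Hgdt; assumption.
    + apply gfun_dt_continuity_2d; [apply ext_time_of_time|apply r_pos]; (lra || exact Hto).
  - apply (filter_imp _ _ (fun s Hs => ex_RInt_gfun s (ext_time_of_time s (proj1 Hs) (proj2 Hs))) Hloc).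
Qed.

Lemma double_radius_le_Lfun th t : 0 <= t -> Rbar_lt (Finite t) omega ->
  2 * r th t <= Lfun r t.
Proof.
  intros Ht Hto. assert (H := ext_time_of_time t Ht Hto).
  apply (double_radius_le_length (fun x => r x t) (fun x => Dth r x t)).
  - intros x. apply Derive_correct, (ex_derive_iterD_th nil x t H).
  - intros x. apply continuous_of_continuity_2d_pt, (iterD_continuity_2d (false :: nil) x t H).
  - intros x. now apply r_periodic.
  - intros x. now apply r_pos.
Qed.

Lemma Lfun_pos t : 0 <= t -> Rbar_lt (Finite t) omega -> 0 < Lfun r t.
Proof.
  intros Ht Hto. pose proof (double_radius_le_Lfun 0 t Ht Hto). pose proof (r_pos 0 t Ht Hto).
  lra.
Qed.

Ltac ex_derive_iterD_th_tac H :=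
  first [ exact (ex_derive_iterD_th nil _ _ H)
        | exact (ex_derive_iterD_th (false :: nil) _ _ H)
        | exact (ex_derive_iterD_th (false :: false :: nil) _ _ H)
        | exact (ex_derive_iterD_th (true :: nil) _ _ H) ].

Lemma flux_is_derive a t th : ext_time t -> 0 < r th t ->
  is_derive (flux r a t) th (flux_dtheta r a t th).
Proof.
  intros H Hr. pose proof (gfun_pos r th t Hr) as Hg.
  assert (Hsq : r th t * (r th t * 1) + Dth r th t * (Dth r th t * 1)
                = r th t ^ 2 + Dth r th t ^ 2) by ring.
  assert (Hpos2 : 0 < r th t ^ 2 + Dth r th t ^ 2)
    by (apply Rplus_lt_le_0_compat; [apply pow_lt, Hr|apply pow2_ge_0]).
  assert (Hg2 := gfun_sq r th t).
  unfold flux, flux_dtheta, gfun in *. auto_derive.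
  - repeat split; try ex_derive_iterD_th_tac H; rewrite ?Hsq; lra.
  - change (Derive (fun x => r x t) th) with (Dth r th t).
    change (Derive (fun x => Dth r x t) th) with (Dth (Dth r) th t).
    change (Derive (fun x => Dt r x t) th) with (Dth (Dt r) th t).
    rewrite Hsq. field. split; [nra|lra].
Qed.

Lemma flux_dtheta_continuity_2d a t th : ext_time t -> 0 < r th t ->
  continuity_2d_pt (fun u v => flux_dtheta r a v u) th t.
Proof.
  intros H Hr. pose proof (gfun_pos r th t Hr). unfold flux_dtheta, Rdiv. cbv zeta.
  repeat first
    [ apply continuity_2d_pt_plus | apply continuity_2d_pt_minus | apply continuity_2d_pt_opp
    | apply continuity_2d_pt_mult | apply continuity_2d_pt_const | apply continuity_2d_pt_pow2
    | exact (iterD_continuity_2d nil th t H)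
    | exact (iterD_continuity_2d (false :: nil) th t H)
    | exact (iterD_continuity_2d (false :: false :: nil) th t H)
    | exact (iterD_continuity_2d (true :: nil) th t H)
    | exact (iterD_continuity_2d (false :: true :: nil) th t H)
    | exact (gfun_continuity_2d th t H)
    | apply continuity_2d_pt_inv ].
  all: apply Rgt_not_eq; try apply pow_lt; nra.
Qed.

Lemma flux_periodic a t : 0 <= t -> Rbar_lt (Finite t) omega ->
  flux r a t (2 * PI) = flux r a t 0.
Proof.
  intros Ht Hto. unfold flux.
  rewrite <- (Rplus_0_l (2 * PI)), !r_flow by assumption.
  unfold gage_rhs, gfun.
  now rewrite r_periodic, Dth_periodic, Dth2_periodic by assumption.
Qed.

Lemma gfun_dt_le t th : 0 <= t -> Rbar_lt (Finite t) omega ->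
  let a := 2 * PI / Lfun r t in
  gfun_dt r th t <= - a + a ^ 2 * gfun r th t + flux_dtheta r a t th.
Proof.
  intros Ht Hto a. assert (H := ext_time_of_time t Ht Hto).
  assert (Hr := r_pos th t Ht Hto).
  assert (HL := Lfun_pos t Ht Hto).
  unfold gfun_dt, flux_dtheta. cbv zeta.
  rewrite Dt_Dth, r_flow, gage_rhs_pt by (assumption || lra).
  apply speed_rate_le; [exact Hr|now apply gfun_pos|apply gfun_sq].
Qed.

Lemma RInt_gfun_dt_nonpos t : 0 <= t -> Rbar_lt (Finite t) omega ->
  RInt (fun th => gfun_dt r th t) 0 (2 * PI) <= 0.
Proof.
  intros Ht Hto. assert (H := ext_time_of_time t Ht Hto). pose proof PI_RGT_0.
  assert (HL := Lfun_pos t Ht Hto).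
  set (a := 2 * PI / Lfun r t).
  assert (HDF : forall th, continuous (flux_dtheta r a t) th).
  { intros th. apply (continuous_of_continuity_2d_pt (fun u v => flux_dtheta r a v u)).
    apply flux_dtheta_continuity_2d; [exact H|now apply r_pos]. }
  assert (Hbound : is_RInt (fun th => - a + a ^ 2 * gfun r th t + flux_dtheta r a t th)
                     0 (2 * PI) ((2 * PI - 0) * - a + a ^ 2 * Lfun r t
                                 + (flux r a t (2 * PI) - flux r a t 0))).
  { apply (is_RInt_plus (V := R_NormedModule)); [apply (is_RInt_plus (V := R_NormedModule))|].
    - apply (is_RInt_const (V := R_NormedModule)).
    - apply (is_RInt_scal (V := R_NormedModule)). unfold Lfun.
      apply (RInt_correct (V := R_CompleteNormedModule)), ex_RInt_gfun, H.
    - apply (is_RInt_derive (flux r a t)); [|intros; apply HDF].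
      intros th _. apply flux_is_derive; [exact H|now apply r_pos]. }
  eapply Rle_trans.
  - apply RInt_le; [lra| | |intros th _; exact (gfun_dt_le t th Ht Hto)].
    + apply ex_RInt_of_continuous. intros th _.
      apply continuous_of_continuity_2d_pt, gfun_dt_continuity_2d; [exact H|now apply r_pos].
    + eexists. exact Hbound.
  - fold a. rewrite (is_RInt_unique _ _ _ _ Hbound), flux_periodic by assumption.
    unfold a. right. field. lra.
Qed.

Lemma Lfun_nonincreasing t : 0 <= t -> Rbar_lt (Finite t) omega -> Lfun r t <= Lfun r 0.
Proof.
  intros Ht Hto. destruct Ht as [Ht|<-]; [|lra].
  assert (Hbefore : forall s, 0 <= s <= t -> Rbar_lt (Finite s) omega)
    by (intros s Hs; eapply Rbar_le_lt_trans; [|exact Hto]; simpl; lra).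
  destruct (MVT_gen (Lfun r) 0 t (fun s => RInt (fun th => gfun_dt r th s) 0 (2 * PI)))
    as [c [Hc Hmvt]].
  - intros s Hs. rewrite Rmin_left, Rmax_right in Hs by lra.
    apply Lfun_is_derive; [lra|apply Hbefore; lra].
  - intros s Hs. rewrite Rmin_left, Rmax_right in Hs by lra.
    apply Lfun_continuity, ext_time_of_time; [lra|apply Hbefore; lra].
  - rewrite Rmin_left, Rmax_right in Hc by lra.
    assert (RInt (fun th => gfun_dt r th c) 0 (2 * PI) <= 0)
      by (apply RInt_gfun_dt_nonpos; [lra|apply Hbefore; lra]).
    assert (Lfun r t - Lfun r 0 <= 0) by (rewrite Hmvt; apply Rmult_le_0_r; lra).
    lra.
Qed.

Lemma gage_rhs_is_derive_crit th t : 0 <= t -> Rbar_lt (Finite t) omega ->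
  Dth (Dth r) th t = 0 ->
  is_derive (fun x => gage_rhs r x t) th
    (rhs_pt_dtheta_crit (r th t) (Dth r th t) (Dth (Dth (Dth r)) th t) (gfun r th t)
       (2 * PI / Lfun r t)).
Proof.
  intros Ht Hto Hq. assert (H := ext_time_of_time t Ht Hto).
  assert (HL := Lfun_pos t Ht Hto). assert (Hr := r_pos th t Ht Hto).
  pose proof (gfun_pos r th t Hr) as Hg.
  assert (Hsq : r th t * (r th t * 1) + Dth r th t * (Dth r th t * 1)
                = r th t ^ 2 + Dth r th t ^ 2) by ring.
  assert (Hpos2 : 0 < r th t ^ 2 + Dth r th t ^ 2)
    by (apply Rplus_lt_le_0_compat; [apply pow_lt, Hr|apply pow2_ge_0]).
  assert (Hg2 := gfun_sq r th t).
  unfold gage_rhs, rhs_pt_dtheta_crit, gfun in *. cbv zeta. auto_derive.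
  - repeat split; try ex_derive_iterD_th_tac H; rewrite ?Hsq;
      try apply Rgt_not_eq; repeat apply Rmult_lt_0_compat; lra.
  - change (Derive (fun x => r x t) th) with (Dth r th t).
    change (Derive (fun x => Dth r x t) th) with (Dth (Dth r) th t).
    change (Derive (fun x => Dth (Dth r) x t) th) with (Dth (Dth (Dth r)) th t).
    rewrite Hq, Hsq. field. repeat split; lra.
Qed.

Lemma Dth_periodic_representative th t : 0 <= t -> Rbar_lt (Finite t) omega ->
  exists y, 0 <= y <= 2 * PI /\ Dth r th t = Dth r y t.
Proof.
  intros Ht Hto. pose proof PI_RGT_0.
  destruct (periodic_representative (fun x => Dth r x t) (2 * PI) ltac:(lra)
              (fun x => Dth_periodic x t Ht Hto) th) as [y [Hy E]].
  exists y. split; [lra|exact E].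
Qed.

Lemma no_first_touching C ts ths : 0 < ts -> Rbar_lt (Finite ts) omega ->
  3 * Lfun r 0 / PI < C ->
  (forall s, 0 <= s < ts -> Dth r ths s ^ 2 < C ^ 2) ->
  (forall th, 0 <= th <= 2 * PI -> Dth r th ts ^ 2 <= C ^ 2) ->
  Dth r ths ts ^ 2 = C ^ 2 -> False.
Proof.
  intros Hts Htso HC Hbefore Hat Htouch.
  assert (Hts0 : 0 <= ts) by lra.
  assert (H := ext_time_of_time ts Hts0 Htso). pose proof PI_RGT_0.
  assert (HL0 : 0 < Lfun r 0)
    by (apply Lfun_pos; [lra|eapply Rbar_le_lt_trans; [|exact Htso]; simpl; lra]).
  assert (HCpos : 0 < C).
  { apply Rlt_trans with (3 * Lfun r 0 / PI); [apply Rdiv_lt_0_compat|]; lra. }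
  set (P := Dth r ths ts) in *.
  assert (HP : P <> 0).
  { intros HP0. rewrite HP0 in Htouch. pose proof (pow_lt C 2 HCpos). simpl in *. lra. }
  assert (Hmax : forall th, P * Dth r th ts <= P * P).
  { intros th. destruct (Dth_periodic_representative th ts Hts0 Htso) as [y [Hy ->]].
    apply (mul_le_sq_of_sq_le P). rewrite Htouch. exact (Hat y Hy). }
  assert (HD1 : forall th, is_derive (fun x => P * Dth r x ts) th (P * Dth (Dth r) th ts)).
  { intros th. apply (is_derive_scal (fun x => Dth r x ts)), Derive_correct.
    exact (ex_derive_iterD_th (false :: nil) th ts H). }
  assert (Hq : Dth (Dth r) ths ts = 0).
  { assert (Hcrit : P * Dth (Dth r) ths ts = 0) by (apply (is_derive_max _ ths _ (HD1 ths)), Hmax).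
    now apply Rmult_integral in Hcrit as [|]. }
  assert (Hs : P * Dth (Dth (Dth r)) ths ts <= 0).
  { apply (is_derive2_max _ _ ths _ HD1); [|exact Hmax].
    apply (is_derive_scal (fun x => Dth (Dth r) x ts)), Derive_correct.
    exact (ex_derive_iterD_th (false :: false :: nil) ths ts H). }
  assert (Htime : 0 <= P * Dt (Dth r) ths ts).
  { apply (is_derive_ge0_left_max (fun s => P * Dth r ths s) ts _ ts); [|exact Hts|].
    - apply (is_derive_scal (fun s => Dth r ths s)), Derive_correct.
      exact (ex_derive_iterD_t (false :: nil) ths ts H).
    - intros s Hs'. apply (mul_le_sq_of_sq_le P). rewrite Htouch.
      apply Rlt_le, Hbefore. lra. }
  assert (Hrate : Dt (Dth r) ths ts
     = rhs_pt_dtheta_crit (r ths ts) P (Dth (Dth (Dth r)) ths ts) (gfun r ths ts)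
         (2 * PI / Lfun r ts)).
  { rewrite Dt_Dth by exact H. unfold Dth at 1.
    rewrite (Derive_ext _ _ ths (fun x => r_flow x ts Hts0 Htso)).
    now apply is_derive_unique, gage_rhs_is_derive_crit. }
  rewrite Hrate in Htime.
  assert (HLt := Lfun_nonincreasing ts Hts0 Htso).
  assert (HLpos := Lfun_pos ts Hts0 Htso).
  assert (Hr := r_pos ths ts Hts0 Htso).
  assert (Hrad := double_radius_le_Lfun ths ts Hts0 Htso).
  assert (Hg := gfun_pos r ths ts Hr). assert (Hg2 := gfun_sq r ths ts). fold P in Hg2.
  assert (HLC : Lfun r 0 / 2 < C).
  { apply Rle_lt_trans with (3 * Lfun r 0 / PI); [|exact HC].
    apply Rmult_le_reg_r with (2 * PI); [lra|].
    replace (3 * Lfun r 0 / PI * (2 * PI)) with (6 * Lfun r 0) by (field; lra).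
    pose proof PI_4. nra. }
  assert (Hgc : C <= gfun r ths ts).
  { apply Rnot_lt_le. intros Hlt. pose proof (sq_lt_sq _ _ (Rlt_le _ _ Hg) Hlt).
    pose proof (pow2_ge_0 (r ths ts)). lra. }
  assert (Hrp : r ths ts ^ 2 <= P ^ 2) by (pose proof (sq_lt_sq (r ths ts) C); lra).
  assert (Hag : 6 < 2 * PI / Lfun r ts * gfun r ths ts).
  { apply Rmult_lt_reg_r with (Lfun r ts); [exact HLpos|].
    replace (2 * PI / Lfun r ts * gfun r ths ts * Lfun r ts) with (2 * PI * gfun r ths ts)
      by (field; lra).
    apply Rmult_lt_reg_r with (/ (2 * PI)); [apply Rinv_0_lt_compat; lra|].
    replace (2 * PI * gfun r ths ts * / (2 * PI)) with (gfun r ths ts) by (field; lra).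
    replace (6 * Lfun r ts * / (2 * PI)) with (3 * Lfun r ts / PI) by (field; lra).
    apply Rle_lt_trans with (3 * Lfun r 0 / PI); [|lra].
    apply Rmult_le_compat_r; [apply Rlt_le, Rinv_0_lt_compat; lra|lra]. }
  pose proof (rhs_pt_dtheta_crit_sign (r ths ts) P _ _ _ Hr Hg Hg2 Hrp Hag Hs). lra.
Qed.

Lemma Dth_sq_lt_of_initial C : 3 * Lfun r 0 / PI < C ->
  (forall th, 0 <= th <= 2 * PI -> Dth r th 0 ^ 2 < C ^ 2) ->
  forall th t, 0 <= t -> Rbar_lt (Finite t) omega -> Dth r th t ^ 2 < C ^ 2.
Proof.
  intros HC H0 th t Ht Hto. pose proof PI_RGT_0.
  destruct (Dth_periodic_representative th t Ht Hto) as [y [Hy ->]].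
  apply Rnot_le_lt. intros Hreach.
  assert (Hbefore : forall s, 0 <= s <= t -> Rbar_lt (Finite s) omega)
    by (intros s Hs; eapply Rbar_le_lt_trans; [|exact Hto]; simpl; lra).
  destruct (first_touching_time (fun th s => Dth r th s ^ 2) 0 (2 * PI) t (C ^ 2))
    as [ts [ths [Hts [Hths [Htouch [Hlt Hle]]]]]]; try lra.
  - intros th' s _ Hs. apply continuity_2d_pt_pow2.
    apply (iterD_continuity_2d (false :: nil)), ext_time_of_time; [lra|apply Hbefore; lra].
  - exact H0.
  - now exists y.
  - apply (no_first_touching C ts ths); [lra|apply Hbefore; lra|exact HC| |exact Hle|exact Htouch].
    intros s Hs. now apply Hlt.
Qed.

Lemma radius_le_half_initial_length th t : 0 <= t -> Rbar_lt (Finite t) omega ->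
  r th t <= Lfun r 0 / 2.
Proof.
  intros Ht Hto.
  pose proof (double_radius_le_Lfun th t Ht Hto). pose proof (Lfun_nonincreasing t Ht Hto).
  lra.
Qed.

Lemma abs_Dth_le th t : Rbar_lt (Finite 0) omega -> 0 <= t -> Rbar_lt (Finite t) omega ->
  Rabs (Dth r th t) <= Rmax (max_abs_dr0 r) (3 * Lfun r 0 / PI).
Proof.
  intros Hom Ht Hto. pose proof PI_RGT_0.
  set (C1 := Rmax (max_abs_dr0 r) (3 * Lfun r 0 / PI)).
  assert (HM0 : forall x, 0 <= x <= 2 * PI -> Rabs (Dth r x 0) <= max_abs_dr0 r).
  { intros x Hx. apply (Lub_Rbar_image_ge (fun x => Rabs (Dth r x 0))); [lra| |exact Hx].
    intros y _. apply continuity_pt_filterlim, (continuous_Rabs_comp (fun x => Dth r x 0)).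
    apply continuous_of_continuity_2d_pt.
    apply (iterD_continuity_2d (false :: nil)), ext_time_of_time; [lra|exact Hom]. }
  apply le_epsilon. intros eps Heps.
  assert (Hbound : Dth r th t ^ 2 < (C1 + eps) ^ 2).
  { apply Dth_sq_lt_of_initial; try assumption.
    - pose proof (Rmax_r (max_abs_dr0 r) (3 * Lfun r 0 / PI)). unfold C1. lra.
    - intros x Hx. rewrite <- pow2_abs. apply sq_lt_sq; [apply Rabs_pos|].
      pose proof (Rmax_l (max_abs_dr0 r) (3 * Lfun r 0 / PI)). specialize (HM0 x Hx).
      unfold C1. lra. }
  assert (HC1 : 0 <= C1).
  { pose proof (HM0 0 ltac:(lra)). pose proof (Rabs_pos (Dth r 0 0)).
    pose proof (Rmax_l (max_abs_dr0 r) (3 * Lfun r 0 / PI)). unfold C1. lra. }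
  rewrite <- pow2_abs in Hbound. apply Rnot_lt_le. intros Hlt.
  pose proof (sq_lt_sq (C1 + eps) (Rabs (Dth r th t)) ltac:(lra) Hlt). lra.
Qed.

End GageFlow.

Theorem lemma2p4 (r : R -> R -> R) (omega : Rbar) (c : R) :
  Rbar_lt (Finite 0) omega ->
  (* r is smooth on R x [0, omega) (in the sense of admitting a smooth
     extension to R x (-delta, omega); r itself is taken as that extension) *)
  (exists delta : R, 0 < delta /\
     smooth_on (fun _ t => - delta < t /\ Rbar_lt (Finite t) omega) r) ->
  (* 2 pi-periodic in theta *)
  (forall th t, 0 <= t -> Rbar_lt (Finite t) omega ->
     r (th + 2 * PI) t = r th t) ->
  (* r takes values in (0, oo) *)
  (forall th t, 0 <= t -> Rbar_lt (Finite t) omega -> 0 < r th t) ->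
  (* r solves the evolution equation (initial curve X_0 = r(.,0)(cos,sin)) *)
  (forall th t, 0 <= t -> Rbar_lt (Finite t) omega ->
     Dt r th t = gage_rhs r th t) ->
  (* uniform positive lower bound *)
  0 < c ->
  (forall th t, 0 <= t -> Rbar_lt (Finite t) omega -> c <= r th t) ->
  forall th t, 0 <= t -> Rbar_lt (Finite t) omega ->
    r th t <= Lfun r 0 / 2 /\
    Rabs (Dth r th t) <= Rmax (max_abs_dr0 r) (3 * Lfun r 0 / PI).
Proof.
  intros Hom [delta [Hdelta Hsmooth]] Hper Hpos Hflow _ _ th t Ht Hto.
  split.
  - exact (radius_le_half_initial_length r omega delta Hdelta Hsmooth Hper Hpos Hflow th t Ht Hto).
  - exact (abs_Dth_le r omega delta Hdelta Hsmooth Hper Hpos Hflow th t Hom Ht Hto).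
Qed.
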